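(* Consider the local time-stepping Adams–Bashforth scheme of order $k$ described in the context, and suppose that for each set $s$ the right-hand side splits as $\mathbf{D}^s(\mathbf{y}^1,\ldots,\mathbf{y}^S)=\mathbf{V}^s(\mathbf{y}^s)+\mathbf{B}^s(\mathbf{y}^1,\ldots,\mathbf{y}^S)$, where $\mathbf{V}^s$ depends only on $\mathbf{y}^s$. Then for every set $s$ and step index $m$ (large enough that all indices exist), $$\mathbf{y}^s_{m+1}-\mathbf{y}^s_m=\Delta t^s_m\sum_{j=0}^{k-1}\alpha^s_{mj}\,\mathbf{V}^s(\mathbf{y}^s_{m-j})+\sum_{n=n^s(m)}^{n^s(m+1)-1}\ \sum_{q^1=m^1(n)-(k-1)}^{m^1(n)}\cdots\sum_{q^S=m^S(n)-(k-1)}^{m^S(n)}\beta_{n;q^1\cdots q^S}\,\mathbf{B}^s(\mathbf{y}^1_{q^1},\ldots,\mathbf{y}^S_{q^S}),$$ where $\Delta t^s_m=t^s_{m+1}-t^s_m$ and $\alpha^s_{mj}=\frac{1}{\Delta t^s_m}\int_{t^s_m}^{t^s_{m+1}}\ell_j(t;t^s_m,t^s_{m-1},\ldots,t^s_{m-(k-1)})\,dt$ are the standard (variable-step) Adams–Bashforth coefficients for the evaluation times of set $s$. That is, the volume part is advanced by the standard global Adams–Bashforth rule on set $s$'s own times, and only the coupling terms use the local time-stepping coefficients.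
   Context: We solve an autonomous system $\frac{d\mathbf{y}}{dt}=\mathbf{D}(\mathbf{y})$, $\mathbf{y}\in\mathbb{R}^N$. The components of $\mathbf{y}$ are partitioned into $S$ sets, $\mathbf{y}=(\mathbf{y}^1,\ldots,\mathbf{y}^S)$, and $\mathbf{D}^s$ denotes the components of $\mathbf{D}$ belonging to set $s$. Set $s$ is evaluated at strictly increasing times $t^s_0<t^s_1<\cdots$, and $\mathbf{y}^s_q$ denotes the numerical value of $\mathbf{y}^s$ at time $t^s_q$. Let $\tilde t_0<\tilde t_1<\cdots$ be the increasing enumeration of the union of all evaluation times of all sets, $\Delta\tilde t_n=\tilde t_{n+1}-\tilde t_n$. For each $s,n$ let $m^s(n)$ be the index with $t^s_{m^s(n)}\le\tilde t_n<t^s_{m^s(n)+1}$, and let $n^s(m)$ be defined by $\tilde t_{n^s(m)}=t^s_m$. Lagrange polynomials: $\ell_j(t;\tau_0,\ldots,\tau_{k-1})=\prod_{i\ne j}\frac{t-\tau_i}{\tau_j-\tau_i}$. Adams–Bashforth coefficients for the merged sequence: $\tilde\alpha_{ni}=\frac{1}{\Delta\tilde t_n}\int_{\tilde t_n}^{\tilde t_{n+1}}\ell_i(t;\tilde t_n,\ldots,\tilde t_{n-(k-1)})\,dt$. Define $\beta_{n;q^1\cdots q^S}=\Delta\tilde t_n\sum_{i=0}^{k-1}\tilde\alpha_{ni}\prod_{s=1}^S\ell_{m^s(n)-q^s}\big(\tilde t_{n-i};t^s_{m^s(n)},\ldots,t^s_{m^s(n)-(k-1)}\big)$. The scheme updates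 set $s$ from $t^s_m$ to $t^s_{m+1}$ by $\mathbf{y}^s_{m+1}=\mathbf{y}^s_m+\sum_{n=n^s(m)}^{n^s(m+1)-1}\sum_{q^1=m^1(n)-(k-1)}^{m^1(n)}\cdots\sum_{q^S=m^S(n)-(k-1)}^{m^S(n)}\beta_{n;q^1\cdots q^S}\,\mathbf{D}^s(\mathbf{y}^1_{q^1},\ldots,\mathbf{y}^S_{q^S})$. *)

From HB Require Import structures.
From mathcomp Require Import all_boot all_order all_algebra.
From mathcomp Require Import all_classical all_reals all_analysis.
Set Implicit Arguments. Unset Strict Implicit. Unset Printing Implicit Defensive.
Import Order.TTheory GRing.Theory Num.Theory.
Import numFieldNormedType.Exports.
Local Open Scope classical_set_scope.
Local Open Scope ring_scope.

Definition lagr (R : realType) (k : nat) (tau : nat -> R) (j : nat) (t : R) : R :=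
  \prod_(i < k | (i : nat) != j) ((t - tau i) / (tau j - tau i)).

Definition integ (R : realType) (a b : R) (f : R -> R) : R :=
  \int[@lebesgue_measure R]_(x in `[a, b]) f x.

Definition abcoef (R : realType) (k : nat) (tau : nat -> R) (n i : nat) : R :=
  (tau n.+1 - tau n)^-1 * integ (tau n) (tau n.+1) (lagr k (fun j => tau (n - j)%N) i).

(* beta_{n; q^1 ... q^S}; q : 'I_S -> nat gives the actual indices q^s.
   t s q = t^s_q, tt = merged times, msf s n = m^s(n). *)
Definition lts_beta (R : realType) (S k : nat) (t : 'I_S -> nat -> R)
    (tt : nat -> R) (msf : 'I_S -> nat -> nat) (n : nat) (q : 'I_S -> nat) : R :=
  (tt n.+1 - tt n) * \sum_(i < k) (abcoef k tt n i *
     \prod_(s' < S) lagr k (fun j => t s' (msf s' n - j)%N) (msf s' n - q s')%N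
                         (tt (n - i)%N)).

From HB Require Import structures.
From mathcomp Require Import all_boot all_order all_algebra.
From mathcomp Require Import all_classical all_reals all_analysis.
From mathcomp Require Import zify.
Import Order.TTheory GRing.Theory Num.Theory.
Import Order.NatMonotonyTheory.
Local Open Scope ring_scope.

Set Implicit Arguments. Unset Strict Implicit.

(* Fix a set s and a macro-step [t^s_m, t^s_{m+1}), and let l_j be the Lagrange
   basis on the nodes t^s_m, ..., t^s_{m-(k-1)}.  On each micro-step
   [tt_n, tt_{n+1}] of the macro-step, V^s(y^s_{q^s}) depends on q^s only, so in
   the sum over (q^1, ..., q^S) the Lagrange factors of the other sets add up
   to 1 (partition of unity) and drop out.  What remains for l_j is the merged
   Adams-Bashforth quadrature of l_j, a polynomial of degree < k, which is exact:
   it equals the integral of l_j over [tt_n, tt_{n+1}].  Summing over the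
   micro-steps gives the integral of l_j over [t^s_m, t^s_{m+1}], i.e.
   (t^s_{m+1} - t^s_m) alpha^s_{mj}. *)

Section PolyIntegral.
Import numFieldNormedType.Exports.
Variable R : realType.

Lemma integ_horner (a b : R) (p P : {poly R}) : a < b -> P^`() = p ->
  integ a b (horner p) = P.[b] - P.[a].
Proof.
move=> ab dP.
rewrite /integ /Rintegral (@continuous_FTC2 _ _ (horner P)) //=.
- apply: continuous_in_subspaceT => x _; exact: continuous_horner.
- split.
  + by move=> x _; exact: derivable_horner.
  + apply: cvg_at_right_filter; exact: continuous_horner.
  + apply: cvg_at_left_filter; exact: continuous_horner.
- by move=> x _; rewrite -derivE dP.
Qed.

Definition poly_antideriv (p : {poly R}) : {poly R} :=
  \poly_(i < (size p).+1) (if i == 0%N then 0 else p`_i.-1 / i%:R).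

Lemma deriv_poly_antideriv p : (poly_antideriv p)^`() = p.
Proof.
apply/polyP => i; rewrite coef_deriv coef_poly ltnS.
case: ltnP => [_|sp]; last by rewrite mul0rn nth_default.
by rewrite -mulrnAr -mulr_natr mulVf ?mulr1 // pnatr_eq0.
Qed.

Lemma integ_horner_lincomb (I : finType) (c : I -> R) (F : I -> {poly R}) a b :
  a < b -> integ a b (horner (\sum_i c i *: F i)) = \sum_i c i * integ a b (horner (F i)).
Proof.
move=> ab; pose P := \sum_i c i *: poly_antideriv (F i).
have dP : P^`() = \sum_i c i *: F i.
  rewrite /P raddf_sum; apply: eq_bigr => i _ /=.
  by rewrite (derivZ (c i) (poly_antideriv (F i))) deriv_poly_antideriv.
rewrite (integ_horner ab dP) !horner_sum -sumrB; apply: eq_bigr => i _.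
by rewrite !hornerZ -mulrBr (integ_horner ab (deriv_poly_antideriv _)).
Qed.

Lemma sum_integ_horner (u : nat -> R) (p : {poly R}) (a b : nat) :
  (forall n, u n < u n.+1) -> (a < b)%N ->
  \sum_(a <= n < b) integ (u n) (u n.+1) (horner p) = integ (u a) (u b) (horner p).
Proof.
move=> u_incr ab; pose P := poly_antideriv p.
rewrite (integ_horner (homo_ltn_lt u_incr _ _ ab) (deriv_poly_antideriv p)).
rewrite -(telescope_sumr (fun n => P.[u n]) (ltnW ab)).
by apply: eq_big_nat => n _; rewrite (integ_horner (u_incr n) (deriv_poly_antideriv p)).
Qed.

End PolyIntegral.

Section Lagrange.
Variables (R : realType) (k : nat).

Lemma lagr_lagrange (x : nat -> R) (j : 'I_k) :
  injective x -> lagr k x j = horner (tnth (k.-lagrange x) j).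
Proof.
move=> x_inj; apply/funext => t.
rewrite (lagrangeE (leq_ltn_trans (leq0n j) (ltn_ord j)) x_inj).
rewrite hornerM hornerC !horner_prod /lagr big_split /= prodfV mulrC.
by congr (_^-1 * _); apply: eq_bigr => i _; rewrite hornerXsubC.
Qed.

(* [lagrange] from qpoly wants nodes injective on all of nat, which
   [fun i => u (M - i)] is not (truncated subtraction); past [M] we continue
   with [u i] instead, keeping the first [M + 1] nodes. *)
Definition back_nodes (u : nat -> R) (M i : nat) : R :=
  u (if (i <= M)%N then (M - i)%N else i).

Lemma back_nodes_inj (u : nat -> R) M :
  (forall n, u n < u n.+1) -> injective (back_nodes u M).
Proof.
move=> u_incr i j; rewrite /back_nodes.
have u_inj : injective u := inc_inj (le_mono (homo_ltn_lt u_incr)).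
by move=> /u_inj; case: ifP; case: ifP; lia.
Qed.

Lemma lagr_backward (u : nat -> R) M (j : 'I_k) :
  (forall n, u n < u n.+1) -> (k.-1 <= M)%N ->
  lagr k (fun i => u (M - i)%N) j = horner (tnth (k.-lagrange (back_nodes u M)) j).
Proof.
move=> u_incr kM; rewrite -lagr_lagrange; last exact: back_nodes_inj.
have jM : (j <= M)%N by have := ltn_ord j; lia.
apply/funext => t; apply: eq_bigr => i _.
have iM : (i <= M)%N by have := ltn_ord i; lia.
by rewrite /back_nodes iM jM.
Qed.

Lemma sum_lagr_backward (u : nat -> R) M t :
  (0 < k)%N -> (forall n, u n < u n.+1) -> (k.-1 <= M)%N ->
  \sum_(j < k) lagr k (fun i => u (M - i)%N) j t = 1.
Proof.
move=> k_gt0 u_incr kM; have size1 : (size (1 : {poly R})%R <= k)%N by rewrite size_poly1.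
have /(congr1 (horner^~ t)) := lagrange_gen k_gt0 (@back_nodes_inj u M u_incr) size1.
rewrite hornerC horner_sum => ->; apply: eq_bigr => j _.
by rewrite lagr_backward // hornerM !hornerC mul1r.
Qed.

Lemma abcoef_exact (tau : nat -> R) n (p : {poly R}) :
  (0 < k)%N -> (forall i, tau i < tau i.+1) -> (k.-1 <= n)%N -> (size p <= k)%N ->
  (tau n.+1 - tau n) * \sum_(i < k) abcoef k tau n i * p.[tau (n - i)%N] =
  integ (tau n) (tau n.+1) (horner p).
Proof.
move=> k_gt0 tau_incr kn sp.
rewrite [in RHS](lagrange_gen k_gt0 (@back_nodes_inj tau n tau_incr) sp).
under [in RHS]eq_bigr do rewrite mul_polyC.
rewrite integ_horner_lincomb // mulr_sumr; apply: eq_bigr => i _.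
have hi : back_nodes tau n i = tau (n - i)%N.
  by rewrite /back_nodes ifT //; have := ltn_ord i; lia.
rewrite /abcoef lagr_backward //.
have tau_gap : tau n.+1 - tau n != 0 by rewrite subr_eq0 gt_eqF.
by rewrite mulrA mulVKf // hi mulrC.
Qed.

End Lagrange.

Lemma sum_ffun_prod_marginal (R : comNzRingType) (V : lmodType R) (I J : finType)
    (s : I) (F : I -> J -> R) (W : J -> V) :
  (forall s', s' != s -> \sum_b F s' b = 1) ->
  \sum_(q : {ffun I -> J}) (\prod_s' F s' (q s')) *: W (q s) = \sum_a F s a *: W a.
Proof.
move=> marginal1.
transitivity (\sum_(q : {ffun I -> J})
    \sum_a ((q s == a)%:R * \prod_s' F s' (q s')) *: W a).
  apply: eq_bigr => q _; rewrite (bigD1 (q s)) //= eqxx mul1r.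
  rewrite [X in _ = _ + X]big1 ?addr0 // => a.
  by rewrite eq_sym => /negbTE ->; rewrite mul0r scale0r.
rewrite exchange_big; apply: eq_bigr => a _; rewrite -scaler_suml; congr (_ *: _).
(* For a fixed value [a] of [q s], the sum over [q] factorizes over [I]. *)
pose G s' b := if s' == s then (b == a)%:R * F s' b else F s' b.
transitivity (\sum_(q : {ffun I -> J}) \prod_s' G s' (q s')).
  apply: eq_bigr => q _; rewrite (bigD1 s) //= [in RHS](bigD1 s) //= /G eqxx mulrA.
  by congr (_ * _); apply: eq_bigr => s' /negbTE ->.
rewrite -bigA_distr_bigA (bigD1 s) //= [X in _ * X]big1 => [|s' s's]; last first.
  by rewrite /G (negbTE s's) marginal1.
rewrite mulr1 /G eqxx (bigD1 a) //= eqxx mul1r big1 ?addr0 // => b /negbTE ->.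
by rewrite mul0r.
Qed.

Section LocalTimeStepping.
Variables (R : realType) (S k : nat) (t : 'I_S -> nat -> R) (tt : nat -> R).
Variables msf nsf : 'I_S -> nat -> nat.
Hypothesis k_gt0 : (0 < k)%N.
Hypothesis t_incr : forall s q, t s q < t s q.+1.
Hypothesis tt_incr : forall n, tt n < tt n.+1.
Hypothesis msf_bracket : forall s n, t s (msf s n) <= tt n < t s (msf s n).+1.
Hypothesis tt_nsf : forall s m, tt (nsf s m) = t s m.

Let t_mono s : {mono t s : i j / (i <= j)%N >-> i <= j} :=
  le_mono (homo_ltn_lt (t_incr s)).
Let tt_mono : {mono tt : i j / (i <= j)%N >-> i <= j} := le_mono (homo_ltn_lt tt_incr).
Let t_lt s : {mono t s : i j / (i < j)%N >-> i < j} := leW_mono (t_mono s).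
Let tt_lt : {mono tt : i j / (i < j)%N >-> i < j} := leW_mono tt_mono.

Lemma nsf_lt s m : (nsf s m < nsf s m.+1)%N.
Proof. by rewrite -tt_lt !tt_nsf. Qed.

Lemma msf_nsf s m n : (nsf s m <= n < nsf s m.+1)%N -> msf s n = m.
Proof.
case/andP; rewrite -tt_mono -tt_lt !tt_nsf => lo hi.
case/andP: (msf_bracket s n) => lo' hi'.
apply/eqP; rewrite eqn_leq -ltnS -(t_lt s) (le_lt_trans lo' hi) /=.
by rewrite -ltnS -(t_lt s) (le_lt_trans lo hi').
Qed.

Lemma msf_homo s : {homo msf s : i j / (i <= j)%N}.
Proof.
move=> i j ij; rewrite -ltnS -(t_lt s).
case/andP: (msf_bracket s i) => lo _; case/andP: (msf_bracket s j) => _ hi.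
by rewrite (le_lt_trans (le_trans lo _) hi) // tt_mono.
Qed.

Lemma leq_nsf s m : (m <= nsf s m)%N.
Proof. by elim: m => // m IH; exact: leq_ltn_trans IH (nsf_lt s m). Qed.

Lemma leq_msf s n : (msf s n <= n)%N.
Proof.
apply: leq_trans (leq_nsf s _) _; rewrite -tt_mono tt_nsf.
by case/andP: (msf_bracket s n).
Qed.

Lemma lts_beta_windowE n (q : {ffun 'I_S -> 'I_k}) :
  (forall s', (k.-1 <= msf s' n)%N) ->
  lts_beta k t tt msf n (fun s' => (msf s' n - k.-1 + q s')%N) =
  \sum_(i < k) (tt n.+1 - tt n) * abcoef k tt n i *
    \prod_s' lagr k (fun j => t s' (msf s' n - j)%N) (rev_ord (q s')) (tt (n - i)%N).
Proof.
move=> k_le; rewrite /lts_beta mulr_sumr; apply: eq_bigr => i _.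
rewrite mulrA; congr (_ * _); apply: eq_bigr => s' _; congr lagr.
by have := ltn_ord (q s'); have := k_le s'; rewrite /=; lia.
Qed.

Lemma sum_lts_beta_self (V : lmodType R) s n (W : nat -> V) :
  (forall s', (k.-1 <= msf s' n)%N) ->
  \sum_(q : {ffun 'I_S -> 'I_k})
     lts_beta k t tt msf n (fun s' => (msf s' n - k.-1 + q s')%N) *:
     W (msf s n - k.-1 + q s)%N =
  \sum_(j < k) integ (tt n) (tt n.+1) (lagr k (fun i => t s (msf s n - i)%N) j) *:
     W (msf s n - j)%N.
Proof.
move=> k_le; pose ell s' := lagr k (fun i => t s' (msf s' n - i)%N).
have marginal1 x s' : \sum_(b < k) ell s' (rev_ord b) x = 1.
  rewrite (reindex_inj rev_ord_inj).
  by under eq_bigr do rewrite rev_ordK; exact: sum_lagr_backward (t_incr s') (k_le s').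
have inner x : \sum_(q : {ffun 'I_S -> 'I_k}) (\prod_s' ell s' (rev_ord (q s')) x) *:
      W (msf s n - k.-1 + q s)%N = \sum_(j < k) ell s j x *: W (msf s n - j)%N.
  rewrite (@sum_ffun_prod_marginal _ _ _ _ s (fun s' b => ell s' (rev_ord b) x)
    (fun b => W (msf s n - k.-1 + b)%N)) => [|s' _]; last exact: marginal1.
  rewrite (reindex_inj rev_ord_inj); apply: eq_bigr => j _; rewrite rev_ordK.
  by congr (_ *: W _); have := ltn_ord j; have := k_le s; rewrite /=; lia.
transitivity (\sum_(i < k) ((tt n.+1 - tt n) * abcoef k tt n i) *:
    \sum_(j < k) ell s j (tt (n - i)%N) *: W (msf s n - j)%N).
  under eq_bigr do rewrite lts_beta_windowE // scaler_suml.
  rewrite exchange_big; apply: eq_bigr => i _; rewrite -inner scaler_sumr.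
  by apply: eq_bigr => q _; rewrite scalerA.
under eq_bigr do rewrite scaler_sumr.
rewrite exchange_big; apply: eq_bigr => j _.
under eq_bigr do rewrite scalerA.
rewrite -scaler_suml; congr (_ *: _).
have kn : (k.-1 <= n)%N := leq_trans (k_le s) (leq_msf s n).
rewrite (lagr_backward j (t_incr s) (k_le s)) -(abcoef_exact k_gt0 tt_incr kn); last first.
  by rewrite size_lagrange_ //; exact: back_nodes_inj.
rewrite mulr_sumr; apply: eq_bigr => i _.
by rewrite /ell (lagr_backward j (t_incr s) (k_le s)) mulrA.
Qed.

End LocalTimeStepping.

Theorem mainTheorem3 (R : realType) (S k : nat) (N : 'I_S -> nat)
  (t : 'I_S -> nat -> R) (tt : nat -> R)
  (msf : 'I_S -> nat -> nat) (nsf : 'I_S -> nat -> nat)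
  (D : forall s : 'I_S, (forall s' : 'I_S, 'rV[R]_(N s')) -> 'rV[R]_(N s))
  (V : forall s : 'I_S, 'rV[R]_(N s) -> 'rV[R]_(N s))
  (B : forall s : 'I_S, (forall s' : 'I_S, 'rV[R]_(N s')) -> 'rV[R]_(N s))
  (y : forall s : 'I_S, nat -> 'rV[R]_(N s)) :
  (0 < k)%N ->
  (* evaluation times of each set are strictly increasing *)
  (forall s q, t s q < t s q.+1) ->
  (* tt is the increasing enumeration of the union of all evaluation times *)
  (forall n, tt n < tt n.+1) ->
  (forall n, exists s q, tt n = t s q) ->
  (forall s q, exists n, tt n = t s q) ->
  (* m^s(n) and n^s(m) *)
  (forall s n, t s (msf s n) <= tt n < t s (msf s n).+1) ->
  (forall s m, tt (nsf s m) = t s m) ->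
  (* splitting of the right-hand side *)
  (forall s Y, D s Y = V s (Y s) + B s Y) ->
  (* the local time-stepping scheme (whenever all indices exist) *)
  (forall s m, (forall s', (k.-1 <= msf s' (nsf s m))%N) ->
     y s m.+1 = y s m +
       \sum_(nsf s m <= n < nsf s m.+1) \sum_(q : {ffun 'I_S -> 'I_k})
          lts_beta k t tt msf n (fun s' => (msf s' n - k.-1 + q s')%N) *:
          D s (fun s' => y s' (msf s' n - k.-1 + q s')%N)) ->
  forall s m, (forall s', (k.-1 <= msf s' (nsf s m))%N) ->
    y s m.+1 - y s m =
      (t s m.+1 - t s m) *: \sum_(j < k) (abcoef k (t s) m j *: V s (y s (m - j)%N))
      + \sum_(nsf s m <= n < nsf s m.+1) \sum_(q : {ffun 'I_S -> 'I_k})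
          lts_beta k t tt msf n (fun s' => (msf s' n - k.-1 + q s')%N) *:
          B s (fun s' => y s' (msf s' n - k.-1 + q s')%N).
Proof.
move=> k_gt0 t_incr tt_incr _ _ msf_bracket tt_nsf D_split scheme s m k_le.
have msf_on_step := msf_nsf t_incr tt_incr msf_bracket tt_nsf (s := s) (m := m).
have nsf_step := nsf_lt t_incr tt_incr tt_nsf s m.
have k_le_m : (k.-1 <= m)%N by have := k_le s; rewrite msf_on_step // leqnn nsf_step.
rewrite scheme // (addrC (y s m)) addrK.
under eq_bigr do under eq_bigr do rewrite D_split scalerDr.
under eq_bigr do rewrite big_split /=.
rewrite big_split /=; congr (_ + _).
transitivity (\sum_(nsf s m <= n < nsf s m.+1) \sum_(j < k)
    integ (tt n) (tt n.+1) (lagr k (fun i => t s (m - i)%N) j) *: V s (y s (m - j)%N)).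
  apply: eq_big_nat => n n_in; rewrite -(msf_on_step n n_in).
  apply: (sum_lts_beta_self k_gt0 t_incr tt_incr msf_bracket tt_nsf s (fun i => V s (y s i))).
  move=> s'; apply: leq_trans (k_le s') (msf_homo t_incr tt_incr msf_bracket _ _).
  by case/andP: n_in.
rewrite exchange_big scaler_sumr; apply: eq_bigr => j _.
rewrite -scaler_suml scalerA; congr (_ *: _).
have t_gap : t s m.+1 - t s m != 0 by rewrite subr_eq0 gt_eqF.
rewrite /abcoef mulVKf // (lagr_backward j (t_incr s) k_le_m) -!tt_nsf.
exact: sum_integ_horner.
Qed.
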